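(* Let $q$ be a positive multiple of $24$, $w_A,w_B:\mathbb{Z}/q\mathbb{Z}\to[0,1]$, and $a,b:\mathbb{Z}/24\mathbb{Z}\to[0,1]$ given by $a(k):=\frac{24}{q}\sum_{x\equiv k\ (\mathrm{mod}\ 24)}w_A(x)$, $b(k):=\frac{24}{q}\sum_{x\equiv k\ (\mathrm{mod}\ 24)}w_B(x)$. Then $$\frac{24}{q}\sum_{t\in\mathbb{Z}/q\mathbb{Z}}(w_A*w_B)(t)f_q(t)\ \ge\ \sum_{t\in\mathbb{Z}/24\mathbb{Z}}(a*b)(t)f_{24}(t)-\frac1{\sqrt5}\sqrt{\sum_{k}\big(a(k)-a(k)^2\big)}\sqrt{\sum_{k}\big(b(k)-b(k)^2\big)}.$$
   Context: For $f,g:\mathbb{Z}/n\mathbb{Z}\to\mathbb{C}$: convolution $(f*g)(x):=\frac1n\sum_{y\in\mathbb{Z}/n\mathbb{Z}}f(y)g(x-y)$, and $f_n(t):=\#\{x\in\mathbb{Z}/n\mathbb{Z}:x^2=t\}$. Sums over $k$ range over $\mathbb{Z}/24\mathbb{Z}$. *)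

From mathcomp Require Import all_boot all_order all_algebra.
From mathcomp Require Import reals.
Set Implicit Arguments. Unset Strict Implicit. Unset Printing Implicit Defensive.
Import Order.TTheory GRing.Theory Num.Theory.
Local Open Scope ring_scope.

(* A function Z/nZ -> R is encoded as f : nat -> R, of which only the values
   at the canonical representatives 0 <= x < n are used. *)

Definition zconv (R : realType) (n : nat) (f g : nat -> R) (x : nat) : R :=
  n%:R^-1 * \sum_(y < n) f y * g ((x + (n - y)) %% n)%N.

Definition fsq (R : realType) (n : nat) (t : nat) : R :=
  #|[set x : 'I_n | (x * x == t %[mod n])%N]|%:R.

Definition classavg (R : realType) (q : nat) (w : nat -> R) (k : nat) : R :=
  24%:R / q%:R * \sum_(x < q | (x %% 24 == k)%N) w x.

From mathcomp Require Import all_boot all_order all_algebra all_field.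
From mathcomp Require Import reals complex zify ring lra.
Import Order.TTheory GRing.Theory Num.Theory.

(* Write q = 24 m, let a' y := a (y mod 24) lift the class averages to Z/qZ,
   and phi_A := w_A - a', which sums to 0 on every residue class mod 24
   (likewise for B). The left-hand side is (24/q^2) P(w_A, w_B) for the
   bilinear form P(u, v) = sum_{x,y} u(y) v(x^2 - y). Expanding, P(a', b') =
   m^2 P_24(a, b) is the main term and both cross terms vanish. For the error
   P(phi_A, phi_B), Cauchy-Schwarz leaves the l^2 norm of y |-> sum_x
   phi_B(x^2 - y), whose Fourier coefficients are G(xi) Phi_B(xi) with G a
   quadratic Gauss sum. Phi_B(xi) = 0 when m | xi; otherwise |G(xi)|^2 <=
   q #{h : q | 2 xi h} = q gcd(2 xi, q) <= q^2/5, since a divisor d < 5 of q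
   has 2 d | 24. Parseval and ||phi_A||^2 <= m sum_k (a(k) - a(k)^2), which
   holds because 0 <= w_A <= 1, finish the bound. *)

Set Implicit Arguments. Unset Strict Implicit. Unset Printing Implicit Defensive.

Lemma card_dvdn_mul_le_gcdn (c q : nat) : 0 < q ->
  #|[set h : 'I_q | q %| c * h]| <= gcdn c q.
Proof.
move=> q_gt0; set g := gcdn c q; set d := q %/ g.
have g_gt0 : 0 < g by rewrite gcdn_gt0 q_gt0 orbT.
have q_dg : q = d * g by rewrite divnK ?dvdn_gcdr.
have d_gt0 : 0 < d by move: q_gt0; rewrite q_dg muln_gt0 => /andP[].
have d_dvd (h : 'I_q) : h \in [set h : 'I_q | q %| c * h] -> d %| h.
  rewrite inE => q_ch; have : q %| gcdn (c * h) (q * h) by rewrite dvdn_gcd q_ch dvdn_mulr.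
  by rewrite -muln_gcdl -/g {1}q_dg (mulnC g) dvdn_pmul2r.
have lt_g (h : 'I_q) : h %/ d < g by rewrite ltn_divLR // mulnC -q_dg.
rewrite -[g]card_ord; apply: (leq_card_in (fun h => Ordinal (lt_g h))).
move=> h1 h2 /d_dvd d_h1 /d_dvd d_h2 [] eq_div; apply: val_inj.
by rewrite /= -(divnK d_h1) -(divnK d_h2) eq_div.
Qed.

Lemma gcdn_le_div5 (m xi : nat) : 0 < m -> ~~ (m %| xi) ->
  5 * gcdn (2 * xi) (24 * m) <= 24 * m.
Proof.
move=> m_gt0; apply: contraR; rewrite -ltnNge => lt_q.
set q := 24 * m in lt_q *; set g := gcdn (2 * xi) q in lt_q *; set d := q %/ g.
have q_gt0 : 0 < q by rewrite /q muln_gt0 m_gt0.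
have g_gt0 : 0 < g by rewrite gcdn_gt0 q_gt0 orbT.
have q_dg : q = d * g by rewrite divnK ?dvdn_gcdr.
have d_gt0 : 0 < d by move: q_gt0; rewrite q_dg muln_gt0 => /andP[].
have d_lt5 : d < 5 by rewrite -(ltn_pmul2r g_gt0) -q_dg.
have q_dvd : q %| 2 * xi * d.
  by have [j ->] := dvdnP (dvdn_gcdl (2 * xi) q); rewrite -mulnA (mulnC g) -q_dg dvdn_mull.
have dvd24 : 2 * xi * d %| 24 * xi.
  rewrite mulnAC; apply: dvdn_mul (dvdnn xi).
  by move: d_gt0 d_lt5; case: (d) => [|[|[|[|[|]]]]].
have : q %| 24 * xi := dvdn_trans q_dvd dvd24.
by rewrite /q dvdn_pmul2l.
Qed.

(* x - y in Z/nZ, for representatives y <= n *)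
Definition msub (n x y : nat) : nat := (x + (n - y)) %% n.

Lemma msubK (n c u : nat) : c < n -> u < n -> msub n c (msub n c u) = u.
Proof.
rewrite /msub => c_lt u_lt; have n_gt0 : 0 < n by lia.
case: (leqP u c) => [u_le | c_lt_u].
  have -> : c + (n - u) = n + (c - u) by lia.
  rewrite modnDl (modn_small (m := c - u)); last by lia.
  have -> : c + (n - (c - u)) = n + u by lia.
  by rewrite modnDl modn_small.
rewrite (modn_small (m := c + (n - u))); last by lia.
have -> : c + (n - (c + (n - u))) = u by lia.
by rewrite modn_small.
Qed.

Lemma msub_modn (n d x y : nat) : 0 < d -> d %| n -> y <= n ->
  msub n x y %% d = msub d (x %% d) (y %% d).
Proof.
rewrite /msub => d_gt0 d_n y_le; rewrite modn_dvdm //; apply/eqP.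
have lhs : (x + (n - y) + y) %% d = x %% d.
  by rewrite -addnA subnK // -modnDmr (eqP d_n) addn0.
have rhs : (x %% d + (d - y %% d) + y) %% d = x %% d.
  by rewrite -modnDmr -addnA subnK ?modnDr ?modn_mod // ltnW ?ltn_pmod.
by rewrite -(eqn_modDr y) lhs rhs.
Qed.

Local Open Scope ring_scope.

Lemma big_msub (V : nmodType) (n c : nat) (F : nat -> V) : (c < n)%N ->
  \sum_(y < n) F (msub n c y) = \sum_(u < n) F u.
Proof.
move=> c_lt; have n_gt0 : (0 < n)%N by lia.
rewrite (reindex_inj (h := fun u : 'I_n => Ordinal (ltn_pmod (c + (n - u)) n_gt0))) /=.
  by apply: eq_bigr => u _; rewrite msubK.
move=> u1 u2 [] eq_sub; apply: val_inj.
by rewrite /= -(msubK c_lt (ltn_ord u1)) -[RHS](msubK c_lt (ltn_ord u2)); congr msub.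
Qed.

Lemma big_mod_classes (V : nmodType) (d n : nat) (F : nat -> V) : (0 < d)%N ->
  \sum_(u < n) F u = \sum_(k < d) \sum_(u < n | (u %% d == k)%N) F u.
Proof.
by move=> d_gt0; rewrite (partition_big (fun u : 'I_n => Ordinal (ltn_pmod u d_gt0)) xpredT).
Qed.

Lemma big_mod_periodic (V : nmodType) (d m : nat) (F : nat -> V) :
  \sum_(x < d * m) F (x %% d)%N = (\sum_(k < d) F k) *+ m.
Proof.
elim: m => [|m IH]; first by rewrite muln0 big_ord0.
rewrite mulnS big_split_ord /= mulrS -IH; congr (_ + _).
  by apply: eq_bigr => i _; rewrite modn_small.
by apply: eq_bigr => i _; rewrite modnDl.
Qed.

Definition centered (V : nmodType) (d n : nat) (v : nat -> V) : Prop :=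
  forall k : 'I_d, \sum_(u < n | (u %% d == k)%N) v u = 0.

Lemma dft_centered_eq0 (F : comNzRingType) (d m xi : nat) (g : nat -> F) (u : F) :
  (0 < d)%N -> u ^+ (d * m) = 1 -> centered d (d * m) g -> (m %| xi)%N ->
  \sum_(y < d * m) g y * u ^+ (xi * y) = 0.
Proof.
move=> d_gt0 u_dm g_c /dvdnP[j ->].
rewrite (big_mod_classes _ (fun y => g y * u ^+ (j * m * y)) d_gt0) big1 // => k _.
have u_jmd : (u ^+ (j * m)) ^+ d = 1.
  by rewrite -exprM [(_ * d)%N]mulnC mulnCA mulnC exprM u_dm expr1n.
under eq_bigr => y /eqP y_k do rewrite exprM -(expr_mod y u_jmd) y_k.
by rewrite -mulr_suml g_c mul0r.
Qed.

Section RootsOfUnity.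
Variables (F : numClosedFieldType) (q : nat).
Hypothesis q_gt0 : (0 < q)%N.

Lemma prim_root_exists : {z : F | q.-primitive_root z}.
Proof.
pose p : {poly F} := 'X^q - 1; have [r Dp] := closed_field_poly_normal p.
apply/sigW; rewrite (monicP _) ?monicXnsubC // scale1r in Dp.
have rn1 : all q.-unity_root r by apply/allP=> z; rewrite -root_prod_XsubC -Dp.
have sz_r : (q < (size r).+1)%N by rewrite -(size_prod_XsubC r id) -Dp size_XnsubC.
have [|z] := hasP (cyclic.has_prim_root q_gt0 rn1 _ sz_r); last by exists z.
by rewrite -separable_prod_XsubC -Dp cyclotomic.separable_Xn_sub_1 // pnatr_eq0 -lt0n.
Qed.

Lemma sum_expr_unity (u : F) : u ^+ q = 1 ->
  \sum_(x < q) u ^+ x = if u == 1 then q%:R else 0.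
Proof.
case: eqP => [-> _ | /eqP u_neq1 uq1].
  by rewrite (eq_bigr (fun _ => 1)) ?sumr_const ?card_ord // => i _; rewrite expr1n.
apply: (mulfI (x := u - 1)); first by rewrite subr_eq0.
by rewrite mulr0 -subrX1 uq1 subrr.
Qed.

Variable w : F.
Hypothesis w_prim : q.-primitive_root w.

Lemma prim_root_neq0 : w != 0.
Proof. by rewrite (prim_root_eq0 w_prim) -lt0n. Qed.

Lemma norm_prim_root : `|w| = 1.
Proof.
apply/eqP; rewrite -(pexpr_eq1 q_gt0) // -normrX.
by rewrite (prim_expr_order w_prim) normr1.
Qed.

Lemma conj_prim_root : w^* = w^-1.
Proof. by rewrite invC_norm norm_prim_root expr1n invr1 mul1r. Qed.

Lemma prim_rootV : q.-primitive_root w^-1.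
Proof.
have := exp_prim_root w_prim q.-1.
have -> : gcdn q.-1 q = 1%N by rewrite -{2}(prednK q_gt0); apply/eqP; apply: coprimenS.
suff -> : w^-1 = w ^+ q.-1 by rewrite divn1.
apply: (mulfI prim_root_neq0).
by rewrite -exprS prednK // (prim_expr_order w_prim) divff // prim_root_neq0.
Qed.

Lemma sum_prim_root_pair (y y' : 'I_q) :
  \sum_(k < q) (w ^+ y * w^-1 ^+ y') ^+ k = if y == y' then q%:R else 0.
Proof.
rewrite sum_expr_unity; last first.
  by rewrite exprMn -!exprM !(mulnC _ q) !exprM (prim_expr_order w_prim)
    (prim_expr_order prim_rootV) !expr1n mulr1.
rewrite exprVn (can2_eq (divfK _) (mulfK _)) ?expf_neq0 ?prim_root_neq0 // mul1r.
by rewrite (eq_prim_root_expr w_prim) !modn_small.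
Qed.

Lemma parseval (f : nat -> F) :
  \sum_(k < q) `|\sum_(y < q) f y * w ^+ (k * y)| ^+ 2 =
  q%:R * \sum_(y < q) `|f y| ^+ 2.
Proof.
have expand k : `|\sum_(y < q) f y * w ^+ (k * y)| ^+ 2 =
    \sum_(y < q) \sum_(y' < q) f y * (f y')^* * (w ^+ y * w^-1 ^+ y') ^+ k.
  rewrite normCK rmorph_sum mulr_suml; apply: eq_bigr => y _.
  rewrite mulr_sumr; apply: eq_bigr => y' _.
  rewrite rmorphM rmorphXn /= conj_prim_root mulrACA exprMn -!exprM.
  by rewrite (mulnC y) (mulnC y').
under eq_bigr => k _ do rewrite expand.
rewrite exchange_big mulr_sumr; apply: eq_bigr => y _ /=.
rewrite exchange_big (bigD1 y) //= [X in _ + X]big1 => [|y' y'_neq_y].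
  by rewrite -mulr_sumr sum_prim_root_pair eqxx addr0 normCK mulrC.
by rewrite -mulr_sumr sum_prim_root_pair eq_sym (negbTE y'_neq_y) mulr0.
Qed.

Lemma expr_msub (xi c u : nat) : (u < q)%N ->
  w ^+ (xi * msub q c u) = w ^+ (xi * c) * w^-1 ^+ (xi * u).
Proof.
move=> u_lt; rewrite exprVn; apply: (canRL (mulfK _)).
  by rewrite expf_neq0 ?prim_root_neq0.
rewrite -exprD; apply/eqP; rewrite (eq_prim_root_expr w_prim) -mulnDr.
by rewrite -modnMmr modnDml -addnA subnK ?modnDr ?modnMmr // ltnW.
Qed.

Lemma dft_sqsum (g : nat -> F) (xi : nat) :
  \sum_(y < q) (\sum_(x < q) g (msub q (x * x %% q) y)) * w ^+ (xi * y) =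
  (\sum_(x < q) w ^+ (xi * (x * x %% q))) * \sum_(u < q) g u * w^-1 ^+ (xi * u).
Proof.
under eq_bigr => y _ do rewrite mulr_suml.
rewrite exchange_big mulr_suml; apply: eq_bigr => x _ /=.
have sq_lt : (x * x %% q < q)%N by rewrite ltn_pmod.
rewrite mulr_sumr -(big_msub (fun u => _ * (g u * w^-1 ^+ (xi * u))) sq_lt).
apply: eq_bigr => u _.
by rewrite -[X in w ^+ (xi * X)](msubK sq_lt (ltn_ord u)) expr_msub ?ltn_pmod // mulrCA.
Qed.

Lemma gauss_sum_normCK (xi : nat) :
  `|\sum_(x < q) w ^+ (xi * (x * x %% q))| ^+ 2 =
  \sum_(h < q) w ^+ (xi * (h * h)) * (if w ^+ (2 * xi * h) == 1 then q%:R else 0).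
Proof.
transitivity (\sum_(x < q) \sum_(h < q) w ^+ (xi * (h * h)) * (w ^+ (2 * xi * h)) ^+ x).
  rewrite normCK rmorph_sum /= mulr_sumr; apply: eq_bigr => x _.
  rewrite rmorphXn /= conj_prim_root mulr_suml.
  rewrite (reindex_inj (h := fun h : 'I_q => Ordinal (ltn_pmod (x + h) q_gt0))) /=; last first.
    move=> h1 h2 [] /eqP; rewrite eqn_modDl !modn_small // => /eqP eq_h.
    exact: val_inj.
  apply: eq_bigr => h _; rewrite exprVn; apply: (canLR (mulfK _)).
    by rewrite expf_neq0 ?prim_root_neq0.
  rewrite -exprM -!exprD; apply/eqP; rewrite (eq_prim_root_expr w_prim).
  rewrite modnMm modnMmr -modnDmr modnMmr modnDmr; apply/eqP; congr (_ %% q)%N; ring.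
rewrite exchange_big /=; apply: eq_bigr => h _.
rewrite -mulr_sumr sum_expr_unity //.
by rewrite -exprM mulnC exprM (prim_expr_order w_prim) expr1n.
Qed.

Lemma gauss_sum_sqr_le (xi : nat) :
  `|\sum_(x < q) w ^+ (xi * (x * x %% q))| ^+ 2 <= q%:R * (gcdn (2 * xi) q)%:R.
Proof.
apply: le_trans (_ : _ <= q%:R * #|[set h : 'I_q | (q %| 2 * xi * h)%N]|%:R) _; last first.
  by rewrite ler_pM2l ?ltr0n // ler_nat card_dvdn_mul_le_gcdn.
rewrite -(ger0_norm (exprn_ge0 2 (normr_ge0 _))) gauss_sum_normCK.
apply: le_trans (ler_norm_sum _ _ _) _.
rewrite -sum1_card natr_sum mulr_sumr [X in _ <= X]big_mkcond /=; apply: ler_sum => h _.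
rewrite inE normrM normrX norm_prim_root expr1n mul1r (prim_order_dvd w_prim).
by case: ifP => _; rewrite ?normr0 ?mulr0 // normr_nat mulr1.
Qed.
End RootsOfUnity.

Section QuadraticPairing.
Variable R : realType.
Local Notation "x %:C" := (real_complex R x) (format "x %:C") : ring_scope.

Definition sqpair (n : nat) (u v : nat -> R) : R :=
  \sum_(x < n) \sum_(y < n) u y * v (msub n (x * x %% n) y).

Definition modlift (d : nat) (a : nat -> R) (y : nat) : R := a (y %% d)%N.

Lemma sum_zconv_fsq (n : nat) (u v : nat -> R) : (0 < n)%N ->
  \sum_(t < n) zconv n u v t * fsq R n t = n%:R^-1 * sqpair n u v.
Proof.
move=> n_gt0; rewrite /fsq /zconv /sqpair mulr_sumr.
under eq_bigr => t _ do rewrite -sum1_card natr_sum mulr_sumr big_mkcond /=.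
rewrite exchange_big /=; apply: eq_bigr => x _.
rewrite (bigD1 (Ordinal (ltn_pmod (x * x) n_gt0))) //= [X in _ + X]big1 ?addr0.
  by rewrite inE /= modn_mod eqxx mulr1.
move=> t t_neq; rewrite inE /= (modn_small (ltn_ord t)); case: eqP => // eq_t.
by case/eqP: t_neq; apply: val_inj; rewrite /= eq_t.
Qed.

Lemma sqpair_decomp (n : nat) (u v u1 v1 : nat -> R) :
  sqpair n u v = sqpair n u1 v1 + sqpair n u1 (fun y => v y - v1 y)
    + sqpair n (fun y => u y - u1 y) v1
    + sqpair n (fun y => u y - u1 y) (fun y => v y - v1 y).
Proof.
rewrite /sqpair -!big_split; apply: eq_bigr => x _ /=.
by rewrite -!big_split; apply: eq_bigr => y _ /=; ring.
Qed.

Lemma sum_centered_mul_modlift (d n : nat) (v g : nat -> R) : (0 < d)%N ->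
  centered d n v -> \sum_(y < n) v y * modlift d g y = 0.
Proof.
move=> d_gt0 v_c; rewrite (big_mod_classes _ (fun y => v y * modlift d g y) d_gt0).
rewrite big1 // => k _.
under eq_bigr => y /eqP y_k do rewrite /modlift y_k.
by rewrite -mulr_suml v_c mul0r.
Qed.

Lemma sqpair_modlift_r (d m : nat) (u b : nat -> R) : (0 < d)%N ->
  centered d (d * m) u -> sqpair (d * m) u (modlift d b) = 0.
Proof.
move=> d_gt0 u_c; rewrite /sqpair big1 // => x _.
pose g k := b (msub d (x * x %% (d * m) %% d) k).
rewrite -[RHS](sum_centered_mul_modlift g d_gt0 u_c).
by apply: eq_bigr => y _; rewrite /modlift msub_modn ?dvdn_mulr // ltnW.
Qed.

Lemma sqpair_modlift_l (d m : nat) (a v : nat -> R) : (0 < d)%N ->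
  centered d (d * m) v -> sqpair (d * m) (modlift d a) v = 0.
Proof.
move=> d_gt0 v_c; rewrite /sqpair big1 // => x _; set c := (x * x %% (d * m))%N.
have c_lt : (c < d * m)%N by rewrite ltn_pmod // (leq_ltn_trans (leq0n x) (ltn_ord x)).
rewrite -(big_msub (fun y => modlift d a y * v (msub (d * m) c y)) c_lt).
under eq_bigr => y _ do
  rewrite msubK // /modlift msub_modn ?dvdn_mulr ?(ltnW (ltn_ord y)) // mulrC.
exact: (sum_centered_mul_modlift (fun k => a (msub d (c %% d) k)) d_gt0 v_c).
Qed.

Lemma sqpair_modlift (d m : nat) (a b : nat -> R) : (0 < d)%N ->
  sqpair (d * m) (modlift d a) (modlift d b) = m%:R ^+ 2 * sqpair d a b.
Proof.
move=> d_gt0; pose T i j := a j * b (msub d (i * i %% d) j).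
transitivity (\sum_(x < d * m) \sum_(y < d * m) T (x %% d)%N (y %% d)%N).
  apply: eq_bigr => x _; apply: eq_bigr => y _.
  by rewrite /modlift /T msub_modn ?dvdn_mulr ?modn_dvdm ?dvdn_mulr ?modnMm // ltnW.
rewrite (big_mod_periodic _ _ (fun i => \sum_(y < d * m) T i (y %% d)%N)).
under eq_bigr => i _ do rewrite (big_mod_periodic _ _ (T i)).
by rewrite sumrMnl -mulrnA -[in LHS]mulr_natl natrM -expr2.
Qed.

Lemma sum_mod_class_const (d m : nat) (k : 'I_d) (c : R) :
  \sum_(y < d * m | (y %% d == k)%N) c = m%:R * c.
Proof.
transitivity (\sum_(y < d * m) (fun j : nat => if j == k then c else 0) (y %% d)%N).
  by rewrite big_mkcond.
rewrite (big_mod_periodic _ _ (fun j : nat => if j == k then c else 0)) (bigD1 k) //=.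
rewrite eqxx big1 ?addr0 ?mulr_natl // => j.
by rewrite -val_eqE => /negbTE ->.
Qed.

Lemma sum_mod24_class (m : nat) (w : nat -> R) (k : 'I_24) : (0 < m)%N ->
  \sum_(y < 24 * m | (y %% 24 == k)%N) w y = m%:R * classavg (24 * m) w k.
Proof.
move=> m_gt0; have m_neq0 : (m%:R : R) != 0 by rewrite pnatr_eq0 -lt0n.
by rewrite /classavg natrM; field.
Qed.

Lemma centered_sub_classavg (m : nat) (w : nat -> R) : (0 < m)%N ->
  centered 24 (24 * m) (fun y => w y - modlift 24 (classavg (24 * m) w) y).
Proof.
move=> m_gt0 k; rewrite sumrB sum_mod24_class //.
under eq_bigr => y /eqP y_k do rewrite /modlift y_k.
by rewrite sum_mod_class_const subrr.
Qed.

Lemma sum_mul_modlift_classavg (m : nat) (w g : nat -> R) : (0 < m)%N ->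
  \sum_(y < 24 * m) w y * modlift 24 g y =
  m%:R * \sum_(k < 24) classavg (24 * m) w k * g k.
Proof.
move=> m_gt0.
rewrite (big_mod_classes _ (fun y => w y * modlift 24 g y) (isT : (0 < 24)%N)) mulr_sumr.
apply: eq_bigr => k _; under eq_bigr => y /eqP y_k do rewrite /modlift y_k.
by rewrite -mulr_suml sum_mod24_class // mulrA.
Qed.

Lemma sqsum_sub_classavg_le (m : nat) (w : nat -> R) : (0 < m)%N ->
  (forall x, (x < 24 * m)%N -> 0 <= w x <= 1) ->
  \sum_(y < 24 * m) (w y - modlift 24 (classavg (24 * m) w) y) ^+ 2 <=
  m%:R * \sum_(k < 24) (classavg (24 * m) w k - classavg (24 * m) w k ^+ 2).
Proof.
move=> m_gt0 w01; set a := classavg (24 * m) w; under eq_bigr => y _ do rewrite sqrrB.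
rewrite big_split sumrB /= sumrMnl.
have cross : \sum_(y < 24 * m) w y * modlift 24 a y = m%:R * \sum_(k < 24) a k ^+ 2.
  by rewrite sum_mul_modlift_classavg //; under eq_bigr => k _ do rewrite -expr2.
have lift_sq : \sum_(y < 24 * m) modlift 24 a y ^+ 2 = m%:R * \sum_(k < 24) a k ^+ 2.
  by rewrite (big_mod_periodic _ _ (fun k => a k ^+ 2)) mulr_natl.
have w_sq : \sum_(y < 24 * m) w y ^+ 2 <= \sum_(y < 24 * m) w y.
  apply: ler_sum => y _; have /andP[w_ge0 w_le1] := w01 y (ltn_ord y).
  by rewrite expr2 ler_piMr.
have w_sum : \sum_(y < 24 * m) w y = m%:R * \sum_(k < 24) a k.
  have := sum_mul_modlift_classavg w (fun _ => 1) m_gt0.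
  by under eq_bigr do rewrite /modlift mulr1; under [in RHS]eq_bigr do rewrite mulr1.
rewrite cross lift_sq sumrB mulrBr; move: w_sq; rewrite w_sum; lra.
Qed.

Lemma cauchy_schwarz (n : nat) (u v : nat -> R) :
  (\sum_(i < n) u i * v i) ^+ 2 <= (\sum_(i < n) u i ^+ 2) * \sum_(i < n) v i ^+ 2.
Proof.
have sum_prod (f g : nat -> R) :
    \sum_(i < n) \sum_(j < n) f i * g j = (\sum_(i < n) f i) * \sum_(j < n) g j.
  by rewrite mulr_suml; apply: eq_bigr => i _; rewrite mulr_sumr.
have lagrange : \sum_(i < n) \sum_(j < n) (u i * v j - u j * v i) ^+ 2 =
    \sum_(i < n) \sum_(j < n) u i ^+ 2 * v j ^+ 2
    + \sum_(i < n) \sum_(j < n) v i ^+ 2 * u j ^+ 2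
    - (\sum_(i < n) \sum_(j < n) (u i * v i) * (u j * v j)) *+ 2.
  rewrite -big_split -sumrMnl -sumrB.
  apply: eq_bigr => i _; rewrite -big_split -sumrMnl -sumrB.
  by apply: eq_bigr => j _; rewrite mulr2n /=; ring.
have : 0 <= \sum_(i < n) \sum_(j < n) (u i * v j - u j * v i) ^+ 2.
  by apply: sumr_ge0 => i _; apply: sumr_ge0 => j _; apply: sqr_ge0.
rewrite lagrange (sum_prod (fun i => u i ^+ 2) (fun j => v j ^+ 2)).
rewrite (sum_prod (fun i => v i ^+ 2) (fun j => u j ^+ 2)).
rewrite (sum_prod (fun i => u i * v i) (fun j => u j * v j)) expr2 mulr2n; lra.
Qed.

Lemma fourier_bound (m : nat) (v : nat -> R) : (0 < m)%N -> centered 24 (24 * m) v ->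
  \sum_(y < 24 * m) (\sum_(x < 24 * m) v (msub (24 * m) (x * x %% (24 * m)) y)) ^+ 2
  <= (24 * m)%:R ^+ 2 / 5 * \sum_(y < 24 * m) v y ^+ 2.
Proof.
move=> m_gt0 v_c; set q := (24 * m)%N; have q_gt0 : (0 < q)%N by rewrite muln_gt0.
have [z z_prim] := prim_root_exists R[i] q_gt0; have zV_prim := prim_rootV q_gt0 z_prim.
have normC_real (x : R) : `|x%:C| ^+ 2 = (x ^+ 2)%:C.
  by rewrite -add_Re2_Im2 /= expr0n addr0.
pose V xi := \sum_(u < q) (v u)%:C * z^-1 ^+ (xi * u).
have V_eq0 xi : (m %| xi)%N -> V xi = 0.
  rewrite /V; apply: (dft_centered_eq0 (d := 24) (m := m) (g := fun u => (v u)%:C)) => //.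
    by rewrite (prim_expr_order zV_prim).
  by move=> k; rewrite -rmorph_sum v_c rmorph0.
have dft_s k : \sum_(y < q) (\sum_(x < q) v (msub q (x * x %% q) y))%:C * z ^+ (k * y) =
    (\sum_(x < q) z ^+ (k * (x * x %% q))) * V k.
  rewrite -(dft_sqsum q_gt0 z_prim (fun u => (v u)%:C)).
  by apply: eq_bigr => y _; rewrite rmorph_sum.
have dft_le k : `|(\sum_(x < q) z ^+ (k * (x * x %% q))) * V k| ^+ 2 <=
    q%:R ^+ 2 / 5 * `|V k| ^+ 2.
  rewrite normrM exprMn; have [m_k | m_nk] := boolP (m %| k)%N.
    by rewrite V_eq0 // normr0 expr0n !mulr0.
  apply: ler_wpM2r; first exact: exprn_ge0.
  apply: le_trans (gauss_sum_sqr_le q_gt0 z_prim k) _.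
  rewrite ler_pdivlMr ?ltr0n // -natrX -!natrM ler_nat expnS expn1 -mulnA leq_mul2l.
  by rewrite mulnC gcdn_le_div5 ?orbT.
set s := fun y => \sum_(x < q) v (msub q (x * x %% q) y).
have key : (q%:R : R[i]) * \sum_(y < q) `|(s y)%:C| ^+ 2 <=
    q%:R ^+ 2 / 5 * (q%:R * \sum_(y < q) `|(v y)%:C| ^+ 2).
  rewrite -(parseval q_gt0 z_prim (fun y => (s y)%:C)).
  rewrite -(parseval q_gt0 zV_prim (fun y => (v y)%:C)) mulr_sumr.
  by apply: ler_sum => k _; rewrite dft_s.
have natC n : (n%:R : R[i]) = (n%:R)%:C by rewrite rmorph_nat.
move: key; under eq_bigr do rewrite normC_real.
under [in X in _ <= X]eq_bigr do rewrite normC_real.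
rewrite -!rmorph_sum !natC -rmorphXn -fmorphV -!rmorphM lecR.
by rewrite mulrCA ler_pM2l ?ltr0n.
Qed.

Lemma sqpair_sqr_le (m : nat) (u v : nat -> R) : (0 < m)%N -> centered 24 (24 * m) v ->
  sqpair (24 * m) u v ^+ 2 <=
  (24 * m)%:R ^+ 2 / 5 * (\sum_(y < 24 * m) u y ^+ 2) * \sum_(y < 24 * m) v y ^+ 2.
Proof.
move=> m_gt0 v_c; rewrite /sqpair exchange_big /=.
under eq_bigr => y _ do rewrite -mulr_sumr.
set s := fun y => \sum_(x < 24 * m) v (msub (24 * m) (x * x %% (24 * m)) y).
apply: le_trans (cauchy_schwarz _ u s) _.
rewrite mulrAC mulrC; apply: ler_wpM2r; last exact: fourier_bound.
by apply: sumr_ge0 => y _; apply: sqr_ge0.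
Qed.

Lemma sqpair_residual_ge (m : nat) (wA wB : nat -> R) : (0 < m)%N ->
  (forall x, (x < 24 * m)%N -> 0 <= wA x <= 1) ->
  (forall x, (x < 24 * m)%N -> 0 <= wB x <= 1) ->
  - (24 * m%:R ^+ 2 / Num.sqrt 5
     * Num.sqrt (\sum_(k < 24) (classavg (24 * m) wA k - classavg (24 * m) wA k ^+ 2))
     * Num.sqrt (\sum_(k < 24) (classavg (24 * m) wB k - classavg (24 * m) wB k ^+ 2)))
  <= sqpair (24 * m) (fun y => wA y - modlift 24 (classavg (24 * m) wA) y)
                     (fun y => wB y - modlift 24 (classavg (24 * m) wB) y).
Proof.
move=> m_gt0 wA01 wB01.
have X_sqr := sqpair_sqr_le (fun y => wA y - modlift 24 (classavg (24 * m) wA) y)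
  m_gt0 (centered_sub_classavg wB m_gt0).
have NA := sqsum_sub_classavg_le m_gt0 wA01; have NB := sqsum_sub_classavg_le m_gt0 wB01.
move: X_sqr NA NB; set X := sqpair _ _ _; set PA := \sum_(y < _) _; set PB := \sum_(y < _) _.
set SA := \sum_(k < 24) _; set SB := \sum_(k < 24) _; set M := (m%:R : R) => X_sqr NA NB.
have PA_ge0 : 0 <= PA by apply: sumr_ge0 => y _; apply: sqr_ge0.
have PB_ge0 : 0 <= PB by apply: sumr_ge0 => y _; apply: sqr_ge0.
have M_gt0 : 0 < M by rewrite ltr0n.
have SA_ge0 : 0 <= SA by rewrite -(pmulr_rge0 _ M_gt0) (le_trans PA_ge0 NA).
have SB_ge0 : 0 <= SB by rewrite -(pmulr_rge0 _ M_gt0) (le_trans PB_ge0 NB).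
set Y := 24 * M ^+ 2 / Num.sqrt 5 * Num.sqrt SA * Num.sqrt SB.
have Y_ge0 : 0 <= Y by rewrite !mulr_ge0 ?invr_ge0 ?sqrtr_ge0 ?exprn_ge0 ?ler0n ?ltW.
have Y_sqr : Y ^+ 2 = (24 * m)%:R ^+ 2 / 5 * (M * SA) * (M * SB).
  by rewrite /Y !exprMn exprVn !sqr_sqrtr ?ler0n // natrM -/M; field.
have X_le : X ^+ 2 <= Y ^+ 2.
  rewrite Y_sqr; apply: le_trans X_sqr _.
  rewrite -[leLHS]mulrA -[leRHS]mulrA; apply: ler_wpM2l; last exact: ler_pM.
  by rewrite divr_ge0 ?exprn_ge0 ?ler0n.
have : `|X| <= Y.
  by rewrite -(ler_pXn2r (isT : (0 < 2)%N)) ?nnegrE ?normr_ge0 // real_normK ?num_real.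
by case/ler_normlP; rewrite lerNl.
Qed.

End QuadraticPairing.

Theorem mainTheorem7 (R : realType) (q : nat) (wA wB : nat -> R) :
  (0 < q)%N -> (24 %| q)%N ->
  (forall x : nat, (x < q)%N -> 0 <= wA x <= 1) ->
  (forall x : nat, (x < q)%N -> 0 <= wB x <= 1) ->
  let a := classavg q wA in
  let b := classavg q wB in
  24%:R / q%:R * \sum_(t < q) zconv q wA wB t * fsq R q t >=
    \sum_(t < 24) zconv 24 a b t * fsq R 24 t
    - (Num.sqrt 5)^-1
      * Num.sqrt (\sum_(k < 24) (a k - a k ^+ 2))
      * Num.sqrt (\sum_(k < 24) (b k - b k ^+ 2)).
Proof.
move=> q_gt0 q_24 wA01 wB01; cbv zeta.
have [m q_eq] : exists m, q = (24 * m)%N by case/dvdnP: q_24 => m ->; exists m; rewrite mulnC.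
subst q; have m_gt0 : (0 < m)%N by rewrite muln_gt0 in q_gt0.
have residual_ge := sqpair_residual_ge m_gt0 wA01 wB01.
have [cA cB] := (centered_sub_classavg wA m_gt0, centered_sub_classavg wB m_gt0).
set a := classavg _ wA in residual_ge cA *; set b := classavg _ wB in residual_ge cB *.
rewrite !sum_zconv_fsq // (sqpair_decomp (24 * m) wA wB (modlift 24 a) (modlift 24 b)).
rewrite sqpair_modlift // sqpair_modlift_l // sqpair_modlift_r // !addr0.
move: residual_ge; set X := sqpair _ _ _; set L := sqpair 24 a b; set M := (m%:R : R) => X_ge.
have M_gt0 : 0 < M by rewrite ltr0n.
have -> : 24%:R / (24 * m)%:R * ((24 * m)%:R^-1 * (M ^+ 2 * L + X)) =
    24%:R^-1 * L + X / (24 * M ^+ 2) by rewrite natrM; field; rewrite gt_eqF.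
rewrite lerD2l ler_pdivlMr ?mulr_gt0 ?exprn_gt0 //; apply: le_trans X_ge.
by rewrite le_eqVlt; apply/orP; left; apply/eqP; ring.
Qed.
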